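(* Let $f:[0,1]\to\mathbb{R}$ be a $C^2$ function such that $f'(0)\ge 0$, $\inf_{[0,1]}f''>0$, $f'''$ exists and is bounded on $(0,1)$, and $f'f'''-(f'')^2\le0$ on $(0,1)$. Let $x_0\in[0,1]$, let $0<\tilde a\le a$, and suppose $(u,v)\in\mathbb{R}^2$ with $x_0-u\in[0,1]$ solves $$a f(x_0-u)+v=\tilde a f(x_0),\qquad a f'(x_0-u)=\tilde a f'(x_0).$$ Then $a f(x-u)+v\ge \tilde a f(x)$ for every $x$ with $x\in[0,1]$ and $x-u\in[0,1]$. *)

From Stdlib Require Import Reals.
From Coquelicot Require Import Coquelicot.
Open Scope R_scope.

Definition I01 (x : R) : Prop := 0 <= x <= 1.
Definition I01o (x : R) : Prop := 0 < x < 1.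

(* Derivative of f at x relative to the set D (one-sided at endpoints of an
   interval): the difference quotient (f y - f x)/(y - x) tends to l as
   y -> x with y in D, y <> x. *)
Definition deriv_within (D : R -> Prop) (f : R -> R) (x l : R) : Prop :=
  filterlim (fun y => (f y - f x) / (y - x))
            (within (fun y => D y /\ y <> x) (locally x)) (locally l).

Definition cont_within (D : R -> Prop) (f : R -> R) (x : R) : Prop :=
  filterlim f (within D (locally x)) (locally (f x)).

From Stdlib Require Import Reals Lra.
From Coquelicot Require Import Coquelicot.
Open Scope R_scope.

(* Let g x = a f (x - u) + v - ta f x, which vanishes at x0; it suffices that
   g' x = a f' (x - u) - ta f' x is <= 0 left of x0 and >= 0 right of x0.
   Since f'' > 0 and f'(0) >= 0, f' is increasing and positive on (0, 1], and
   f' f''' <= f''^2 says that f' / f'' is nondecreasing, i.e. f' is log-concave.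
   Hence for u >= 0 the ratio f'(x - u) / f' x is nondecreasing in x, and the
   tangency condition says that it equals ta / a at x0.  Finally u >= 0, since
   u < 0 would give f'(x0 - u) > f' x0 >= 0, contradicting ta <= a. *)

Lemma ball_Rabs (x e y : R) : ball x e y <-> Rabs (y - x) < e.
Proof. reflexivity. Qed.

Section RealFilterlim.

Context {T : Type} {F : (T -> Prop) -> Prop} {FF : Filter F}.

Lemma filterlim_Rplus (f g : T -> R) (a b : R) :
  filterlim f F (locally a) -> filterlim g F (locally b) ->
  filterlim (fun y => f y + g y) F (locally (a + b)).
Proof. intros Hf Hg. exact (filterlim_comp_2 _ _ _ Hf Hg (filterlim_plus a b)). Qed.

Lemma filterlim_Rminus (f g : T -> R) (a b : R) :
  filterlim f F (locally a) -> filterlim g F (locally b) ->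
  filterlim (fun y => f y - g y) F (locally (a - b)).
Proof.
  intros Hf Hg.
  exact (filterlim_Rplus _ _ _ _ Hf
           (filterlim_comp _ _ _ _ _ _ _ _ Hg (filterlim_opp (K := R_AbsRing) b))).
Qed.

Lemma filterlim_Rmult (f g : T -> R) (a b : R) :
  filterlim f F (locally a) -> filterlim g F (locally b) ->
  filterlim (fun y => f y * g y) F (locally (a * b)).
Proof. intros Hf Hg. exact (filterlim_comp_2 _ _ _ Hf Hg (filterlim_mult a b)). Qed.

Lemma filterlim_Rinv (f : T -> R) (a : R) :
  a <> 0 -> filterlim f F (locally a) -> filterlim (fun y => / f y) F (locally (/ a)).
Proof.
  intros Ha Hf. apply (filterlim_comp _ _ _ _ _ _ _ _ Hf).
  apply (filterlim_Rbar_inv (Finite a)). intros E. apply Ha. now injection E.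
Qed.

End RealFilterlim.

Lemma cont_within_subset (D D' : R -> Prop) (h : R -> R) (x : R) :
  (forall y, D' y -> D y) -> cont_within D h x -> cont_within D' h x.
Proof.
  intros HD. apply (filterlim_filter_le_1 (F := within D (locally x))).
  intros P HP. apply (filter_imp _ _ (fun y HP' HD' => HP' (HD y HD')) HP).
Qed.

Lemma cont_within_shift (D : R -> Prop) (h : R -> R) (x u : R) :
  cont_within D h (x - u) ->
  cont_within (fun y => D (y - u)) (fun y => h (y - u)) x.
Proof.
  apply (filterlim_comp _ _ _ (fun y => y - u)). intros P [d Hd].
  exists d. intros y Hy HDy. apply Hd; [|exact HDy].
  rewrite ball_Rabs in *. now replace (y - u - (x - u)) with (y - x) by ring.
Qed.

Lemma cont_within_of_is_derive (D : R -> Prop) (h : R -> R) (x l : R) :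
  is_derive h x l -> cont_within D h x.
Proof.
  intros H. apply (filterlim_filter_le_1 _ (filter_le_within (F := locally x) D)).
  apply (ex_derive_continuous (V := R_NormedModule)). now exists l.
Qed.

Lemma cont_within_of_deriv_within (D : R -> Prop) (f : R -> R) (x l : R) :
  deriv_within D f x l -> cont_within D f x.
Proof.
  intros H.
  set (Dx := fun y => D y /\ y <> x).
  assert (Hlin : filterlim (fun y => y - x) (within Dx (locally x)) (locally 0)).
  { apply (filterlim_filter_le_1 _ (filter_le_within (F := locally x) Dx)).
    apply filterlim_locally. intros eps. exists eps. intros y Hy.
    rewrite ball_Rabs in *. now rewrite Rminus_0_r. }
  assert (Hf : filterlim f (within Dx (locally x)) (locally (f x))).
  { pose proof (filterlim_Rplus _ _ _ _ (filterlim_const (f x))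
                  (filterlim_Rmult _ _ _ _ H Hlin)) as Hsum.
    rewrite Rmult_0_r, Rplus_0_r in Hsum.
    eapply filterlim_within_ext; [|exact Hsum].
    intros y [_ Hyx]. field. lra. }
  apply filterlim_locally. intros eps. unfold within.
  apply (filter_imp (fun y => Dx y -> ball (f x) eps (f y))).
  - intros y Hy HDy. destruct (Req_dec y x) as [->|Hyx].
    + apply ball_center.
    + now apply Hy.
  - exact (proj1 (filterlim_locally _ _) Hf eps).
Qed.

Lemma is_derive_of_deriv_within (D : R -> Prop) (f : R -> R) (x l : R) :
  locally x D -> deriv_within D f x l -> is_derive f x l.
Proof.
  intros HD H. apply is_derive_Reals. intros eps Heps.
  pose proof (proj1 (filterlim_locally _ _) H (mkposreal eps Heps)) as Hq.
  destruct (filter_and _ _ HD Hq) as [d Hd].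
  exists d. intros k Hk0 Hk.
  assert (Hb : ball x d (x + k))
    by (rewrite ball_Rabs; now replace (x + k - x) with k by ring).
  destruct (Hd _ Hb) as [HDk Hxk].
  assert (Hne : x + k <> x) by (intros E; apply Hk0; lra).
  specialize (Hxk (conj HDk Hne)). rewrite ball_Rabs in Hxk.
  now replace (x + k - x) with k in Hxk by ring.
Qed.

Lemma is_derive_shift (h : R -> R) (x u l : R) :
  is_derive h (x - u) l -> is_derive (fun y => h (y - u)) x l.
Proof.
  intros H. rewrite <- (Rmult_1_l l).
  apply (is_derive_comp h (fun y => y - u)); [exact H|].
  auto_derive; [exact I | ring].
Qed.

Definition clamp (p q y : R) : R := Rmax p (Rmin q y).

Lemma clamp_mem (p q y : R) : p <= q -> p <= clamp p q y <= q.
Proof. intros. unfold clamp, Rmax, Rmin. repeat destruct Rle_dec; lra. Qed.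

Lemma clamp_id (p q y : R) : p <= y <= q -> clamp p q y = y.
Proof. intros. unfold clamp, Rmax, Rmin. repeat destruct Rle_dec; lra. Qed.

Lemma clamp_lipschitz (p q y z : R) :
  Rabs (clamp p q z - clamp p q y) <= Rabs (z - y).
Proof.
  unfold clamp, Rmax, Rmin. repeat destruct Rle_dec;
    unfold Rabs; repeat destruct Rcase_abs; lra.
Qed.

(* Stdlib's MVT needs continuity on all of [p, q] in the ambient topology, so it
   is applied to [h] composed with the projection [clamp p q] onto [p, q]. *)
Lemma mean_value_within (h dh : R -> R) (p q : R) :
  p < q ->
  (forall y, p <= y <= q -> cont_within (fun z => p <= z <= q) h y) ->
  (forall y, p < y < q -> is_derive h y (dh y)) ->
  exists c, p < c < q /\ h q - h p = dh c * (q - p).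
Proof.
  intros Hpq Hc Hd.
  set (H := fun y => h (clamp p q y)).
  assert (HdH : forall y, p < y < q -> is_derive H y (dh y)).
  { intros y Hy. apply (is_derive_ext_loc h); [|now apply Hd].
    assert (Hr : 0 < Rmin (y - p) (q - y)) by (apply Rmin_glb_lt; lra).
    exists (mkposreal _ Hr). intros t Ht. rewrite ball_Rabs in Ht. simpl in Ht.
    pose proof (Rmin_l (y - p) (q - y)). pose proof (Rmin_r (y - p) (q - y)).
    apply Rabs_def2 in Ht. unfold H. rewrite clamp_id; [reflexivity | lra]. }
  assert (HcH : forall y, continuity_pt H y).
  { intros y. apply continuity_pt_filterlim.
    apply (filterlim_comp _ _ _ (clamp p q) h _
             (within (fun z => p <= z <= q) (locally (clamp p q y)))).
    - intros P [d Hball]. exists d. intros z Hz.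
      apply Hball; [|apply clamp_mem; lra].
      rewrite ball_Rabs in *. eapply Rle_lt_trans; [apply clamp_lipschitz | exact Hz].
    - apply Hc, clamp_mem. lra. }
  assert (HH : forall c, p < c < q -> derivable_pt H c).
  { intros c Hc'. apply ex_derive_Reals_0. exists (dh c). now apply HdH. }
  destruct (MVT H id p q HH (fun c _ => derivable_pt_id c) Hpq (fun c _ => HcH c)
    (fun c _ => derivable_continuous_pt _ _ (derivable_pt_id c))) as [c [Pc Hc2]].
  exists c. split; [exact Pc|].
  rewrite derive_pt_id, (derive_pt_eq_0 H c (dh c) (HH c Pc)) in Hc2.
  2: { apply is_derive_Reals, HdH, Pc. }
  unfold H, id in Hc2. rewrite !clamp_id in Hc2 by lra. lra.
Qed.

Lemma nondecreasing_of_derive_ge0 (h dh : R -> R) (p q : R) :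
  p <= q ->
  (forall y, p <= y <= q -> cont_within (fun z => p <= z <= q) h y) ->
  (forall y, p < y < q -> is_derive h y (dh y)) ->
  (forall y, p < y < q -> 0 <= dh y) ->
  h p <= h q.
Proof.
  intros Hpq Hc Hd Hs. destruct (Rle_lt_or_eq_dec _ _ Hpq) as [Hlt | <-]; [|lra].
  destruct (mean_value_within h dh p q Hlt Hc Hd) as [c [Hpc E]].
  specialize (Hs c Hpc). nra.
Qed.

Lemma increasing_of_derive_gt0 (h dh : R -> R) (p q : R) :
  p < q ->
  (forall y, p <= y <= q -> cont_within (fun z => p <= z <= q) h y) ->
  (forall y, p < y < q -> is_derive h y (dh y)) ->
  (forall y, p < y < q -> 0 < dh y) ->
  h p < h q.
Proof.
  intros Hpq Hc Hd Hs.
  destruct (mean_value_within h dh p q Hpq Hc Hd) as [c [Hpc E]].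
  specialize (Hs c Hpc). nra.
Qed.

Lemma locally_I01 (x : R) : I01o x -> locally x I01.
Proof.
  intros [H0 H1].
  assert (Hr : 0 < Rmin x (1 - x)) by (apply Rmin_glb_lt; lra).
  exists (mkposreal _ Hr). intros y Hy. rewrite ball_Rabs in Hy. simpl in Hy.
  pose proof (Rmin_l x (1 - x)). pose proof (Rmin_r x (1 - x)).
  apply Rabs_def2 in Hy. unfold I01. lra.
Qed.

Lemma is_derive_of_deriv_within_I01 (h dh : R -> R) :
  (forall x, I01 x -> deriv_within I01 h x (dh x)) ->
  forall x, I01o x -> is_derive h x (dh x).
Proof.
  intros H x Hx. apply (is_derive_of_deriv_within I01); [now apply locally_I01|].
  apply H. unfold I01, I01o in *. lra.
Qed.

Section ShiftedGap.

Variables f df : R -> R.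
Hypothesis f_cont : forall x, I01 x -> cont_within I01 f x.
Hypothesis f_derive : forall x, I01o x -> is_derive f x (df x).

Lemma shifted_gap_nondecreasing (a b u p q : R) :
  I01 p -> I01 (p - u) -> I01 q -> I01 (q - u) -> p <= q ->
  (forall y, p < y < q -> b * df y <= a * df (y - u)) ->
  a * f (p - u) - b * f p <= a * f (q - u) - b * f q.
Proof.
  unfold I01. intros Hp Hpu Hq Hqu Hpq Hslope.
  apply (nondecreasing_of_derive_ge0 (fun y => a * f (y - u) - b * f y)
           (fun y => a * df (y - u) - b * df y)); [exact Hpq | | | ].
  - intros y Hy. apply filterlim_Rminus; apply filterlim_Rmult;
      try apply filterlim_const.
    + apply (cont_within_subset (fun z => I01 (z - u)) _ (fun z => f (z - u)));
        [intros z Hz; unfold I01; lra|].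
      apply cont_within_shift, f_cont. unfold I01. lra.
    + apply (cont_within_subset I01); [intros z Hz; unfold I01; lra|].
      apply f_cont. unfold I01. lra.
  - intros y Hy.
    assert (Hshift : is_derive (fun z => f (z - u)) y (df (y - u)))
      by (apply is_derive_shift, f_derive; unfold I01o; lra).
    assert (Hf : is_derive f y (df y)) by (apply f_derive; unfold I01o; lra).
    exact (is_derive_minus _ _ _ _ _ (is_derive_scal _ _ a _ Hshift)
             (is_derive_scal _ _ b _ Hf)).
  - intros y Hy. specialize (Hslope y Hy). lra.
Qed.

Lemma shifted_gap_nonincreasing (a b u p q : R) :
  I01 p -> I01 (p - u) -> I01 q -> I01 (q - u) -> p <= q ->
  (forall y, p < y < q -> a * df (y - u) <= b * df y) ->
  a * f (q - u) - b * f q <= a * f (p - u) - b * f p.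
Proof.
  intros Hp Hpu Hq Hqu Hpq Hslope.
  enough (- a * f (p - u) - - b * f p <= - a * f (q - u) - - b * f q) by lra.
  apply shifted_gap_nondecreasing; try assumption.
  intros y Hy. specialize (Hslope y Hy). lra.
Qed.

End ShiftedGap.

Section LogConcaveIncreasing.

Variables f1 f2 f3 : R -> R.
Hypothesis f1_cont : forall x, I01 x -> cont_within I01 f1 x.
Hypothesis f1_derive : forall x, I01o x -> is_derive f1 x (f2 x).
Hypothesis f2_derive : forall x, I01o x -> is_derive f2 x (f3 x).
Hypothesis f2_pos : forall x, I01o x -> 0 < f2 x.
Hypothesis f1_0_ge0 : 0 <= f1 0.
Hypothesis f1_log_concave : forall x, I01o x -> f1 x * f3 x - f2 x ^ 2 <= 0.

Lemma f1_increasing (p q : R) : 0 <= p -> p < q -> q <= 1 -> f1 p < f1 q.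
Proof.
  intros Hp Hpq Hq. apply (increasing_of_derive_gt0 f1 f2); [exact Hpq | | |].
  - intros y Hy. apply (cont_within_subset I01); [intros z Hz; unfold I01; lra|].
    apply f1_cont. unfold I01. lra.
  - intros y Hy. apply f1_derive. unfold I01o. lra.
  - intros y Hy. apply f2_pos. unfold I01o. lra.
Qed.

Lemma f1_nondecreasing (p q : R) : 0 <= p -> p <= q -> q <= 1 -> f1 p <= f1 q.
Proof.
  intros Hp Hpq Hq. destruct (Rle_lt_or_eq_dec _ _ Hpq) as [Hlt | <-]; [|lra].
  left. now apply f1_increasing.
Qed.

Lemma f1_gt0 (x : R) : 0 < x <= 1 -> 0 < f1 x.
Proof.
  intros Hx. apply Rle_lt_trans with (f1 0); [exact f1_0_ge0|].
  apply f1_increasing; lra.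
Qed.

Lemma f1_ge0 (x : R) : I01 x -> 0 <= f1 x.
Proof.
  intros Hx. apply Rle_trans with (f1 0); [exact f1_0_ge0|].
  apply f1_nondecreasing; unfold I01 in Hx; lra.
Qed.

Lemma f1_f2_cross_le (s t : R) :
  0 < s -> s <= t -> t < 1 -> f1 s * f2 t <= f1 t * f2 s.
Proof.
  intros Hs Hst Ht.
  assert (Hf2 : forall y, s <= y <= t -> 0 < f2 y)
    by (intros y Hy; apply f2_pos; unfold I01o; lra).
  assert (Hd : forall y, s <= y <= t ->
            is_derive (fun z => f1 z / f2 z) y ((f2 y * f2 y - f1 y * f3 y) / f2 y ^ 2)).
  { intros y Hy.
    apply is_derive_div; [apply f1_derive | apply f2_derive | apply Rgt_not_eq, Hf2];
      unfold I01o; lra. }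
  assert (Hratio : f1 s / f2 s <= f1 t / f2 t).
  { apply (nondecreasing_of_derive_ge0 (fun z => f1 z / f2 z)
             (fun y => (f2 y * f2 y - f1 y * f3 y) / f2 y ^ 2));
      [exact Hst | | |].
    - intros y Hy. exact (cont_within_of_is_derive _ _ _ _ (Hd y Hy)).
    - intros y Hy. apply Hd. lra.
    - intros y Hy. assert (Hy2 : 0 < f2 y) by (apply Hf2; lra).
      pose proof (f1_log_concave y ltac:(unfold I01o; lra)) as Hlc. simpl in Hlc.
      apply Rdiv_le_0_compat; [lra | apply pow_lt, Hy2]. }
  assert (Hs2 : 0 < f2 s) by (apply Hf2; lra).
  assert (Ht2 : 0 < f2 t) by (apply Hf2; lra).
  replace (f1 s * f2 t) with (f1 s / f2 s * (f2 s * f2 t)) by (field; lra).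
  replace (f1 t * f2 s) with (f1 t / f2 t * (f2 s * f2 t)) by (field; lra).
  apply Rmult_le_compat_r; [nra | exact Hratio].
Qed.

Lemma f1_shift_ratio_le (u p q : R) :
  0 <= u -> 0 <= p - u -> p <= q -> q <= 1 -> 0 < f1 (p - u) ->
  f1 (p - u) * f1 q <= f1 (q - u) * f1 p.
Proof.
  intros Hu Hpu Hpq Hq Hfpu.
  assert (Hpos : forall t, p <= t <= q -> 0 < f1 t).
  { intros t Ht. apply Rlt_le_trans with (f1 (p - u)); [exact Hfpu|].
    apply f1_nondecreasing; lra. }
  assert (Hratio : f1 (p - u) / f1 p <= f1 (q - u) / f1 q).
  { apply (nondecreasing_of_derive_ge0 (fun t => f1 (t - u) / f1 t)
             (fun t => (f2 (t - u) * f1 t - f1 (t - u) * f2 t) / f1 t ^ 2));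
      [exact Hpq | | |].
    - intros t Ht. unfold Rdiv. apply filterlim_Rmult.
      + apply (cont_within_subset (fun z => I01 (z - u)) _ (fun z => f1 (z - u)));
          [intros z Hz; unfold I01; lra|].
        apply cont_within_shift, f1_cont. unfold I01. lra.
      + apply filterlim_Rinv; [apply Rgt_not_eq, Hpos; lra|].
        apply (cont_within_subset I01); [intros z Hz; unfold I01; lra|].
        apply f1_cont. unfold I01. lra.
    - intros t Ht. apply (is_derive_div (fun z => f1 (z - u)) f1).
      + apply is_derive_shift, f1_derive. unfold I01o. lra.
      + apply f1_derive. unfold I01o. lra.
      + apply Rgt_not_eq, Hpos. lra.
    - intros t Ht. assert (Hft : 0 < f1 t) by (apply Hpos; lra).
      pose proof (f1_f2_cross_le (t - u) t ltac:(lra) ltac:(lra) ltac:(lra)).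
      apply Rdiv_le_0_compat; [lra | apply pow_lt, Hft]. }
  assert (Hp1 : 0 < f1 p) by (apply Hpos; lra).
  assert (Hq1 : 0 < f1 q) by (apply Hpos; lra).
  replace (f1 (p - u) * f1 q) with (f1 (p - u) / f1 p * (f1 p * f1 q)) by (field; lra).
  replace (f1 (q - u) * f1 p) with (f1 (q - u) / f1 q * (f1 p * f1 q)) by (field; lra).
  apply Rmult_le_compat_r; [nra | exact Hratio].
Qed.

Section Tangency.

Variables a b x0 u : R.
Hypothesis b_gt0 : 0 < b.
Hypothesis b_le_a : b <= a.
Hypothesis x0_I01 : I01 x0.
Hypothesis x0u_I01 : I01 (x0 - u).
Hypothesis tangent : a * f1 (x0 - u) = b * f1 x0.

Lemma tangent_shift_ge0 : 0 <= u.
Proof.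
  unfold I01 in *. destruct (Rle_or_lt 0 u) as [Hu | Hu]; [exact Hu|].
  assert (Hlt : f1 x0 < f1 (x0 - u)) by (apply f1_increasing; lra).
  pose proof (f1_ge0 x0 x0_I01). nra.
Qed.

Lemma tangent_slope_right (y : R) : x0 < y -> y <= 1 -> b * f1 y <= a * f1 (y - u).
Proof.
  intros Hy Hy1. pose proof tangent_shift_ge0 as Hu. unfold I01 in *.
  destruct (Rle_lt_or_eq_dec _ _ (f1_ge0 (x0 - u) x0u_I01)) as [Hpos | Hzero].
  - pose proof (f1_shift_ratio_le u x0 y Hu ltac:(lra) ltac:(lra) Hy1 Hpos) as Hratio.
    apply Rmult_le_reg_r with (f1 (x0 - u)); [exact Hpos|].
    replace (a * f1 (y - u) * f1 (x0 - u)) with (f1 (y - u) * (a * f1 (x0 - u))) by ring.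
    rewrite tangent. apply Rmult_le_compat_l with (r := b) in Hratio; lra.
  - assert (Hx0u : x0 - u = 0).
    { destruct (Rle_lt_or_eq_dec 0 (x0 - u)) as [H | H]; [lra | | lra].
      pose proof (f1_gt0 (x0 - u) ltac:(lra)). lra. }
    assert (Hx0 : x0 = 0).
    { destruct (Rle_lt_or_eq_dec 0 x0) as [H | H]; [lra | | lra].
      pose proof (f1_gt0 x0 ltac:(lra)). nra. }
    replace (y - u) with y by lra.
    pose proof (f1_ge0 y ltac:(unfold I01; lra)). nra.
Qed.

Lemma tangent_slope_left (y : R) : 0 < y - u -> y < x0 -> a * f1 (y - u) <= b * f1 y.
Proof.
  intros Hyu Hy. pose proof tangent_shift_ge0 as Hu. unfold I01 in *.
  assert (Hfyu : 0 < f1 (y - u)) by (apply f1_gt0; lra).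
  assert (Hfx0 : 0 < f1 x0) by (apply f1_gt0; lra).
  pose proof (f1_shift_ratio_le u y x0 Hu ltac:(lra) ltac:(lra) ltac:(lra) Hfyu) as Hratio.
  apply Rmult_le_reg_r with (f1 x0); [exact Hfx0|].
  replace (b * f1 y * f1 x0) with (f1 y * (b * f1 x0)) by ring.
  rewrite <- tangent. apply Rmult_le_compat_l with (r := a) in Hratio; lra.
Qed.

End Tangency.

End LogConcaveIncreasing.

Theorem lemma2p1 (f f1 f2 f3 : R -> R)
  (* f is C^2 on [0,1], with f' = f1 and f'' = f2 (one-sided at endpoints) *)
  (Hf1 : forall x, I01 x -> deriv_within I01 f x (f1 x))
  (Hf2 : forall x, I01 x -> deriv_within I01 f1 x (f2 x))
  (Hf2c : forall x, I01 x -> cont_within I01 f2 x)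
  (* f'(0) >= 0 *)
  (H0 : 0 <= f1 0)
  (* inf_[0,1] f'' > 0 *)
  (Hinf : exists m, 0 < m /\ forall x, I01 x -> m <= f2 x)
  (* f''' = f3 exists on (0,1) and is bounded there *)
  (Hf3 : forall x, I01o x -> is_derive f2 x (f3 x))
  (Hf3b : exists M, forall x, I01o x -> Rabs (f3 x) <= M)
  (* f' f''' - (f'')^2 <= 0 on (0,1) *)
  (Hineq : forall x, I01o x -> f1 x * f3 x - (f2 x) ^ 2 <= 0)
  (x0 a ta u v : R)
  (Hx0 : I01 x0) (Hat : 0 < ta) (Hata : ta <= a)
  (Hx0u : I01 (x0 - u))
  (Heq1 : a * f (x0 - u) + v = ta * f x0)
  (Heq2 : a * f1 (x0 - u) = ta * f1 x0) :
  forall x, I01 x -> I01 (x - u) -> a * f (x - u) + v >= ta * f x.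
Proof.
  intros x Hx Hxu.
  assert (Hf_cont : forall y, I01 y -> cont_within I01 f y)
    by (intros y Hy; exact (cont_within_of_deriv_within _ _ _ _ (Hf1 y Hy))).
  assert (Hf1_cont : forall y, I01 y -> cont_within I01 f1 y)
    by (intros y Hy; exact (cont_within_of_deriv_within _ _ _ _ (Hf2 y Hy))).
  pose proof (is_derive_of_deriv_within_I01 f f1 Hf1) as Hf_derive.
  pose proof (is_derive_of_deriv_within_I01 f1 f2 Hf2) as Hf1_derive.
  assert (Hf2_pos : forall y, I01o y -> 0 < f2 y).
  { destruct Hinf as [m [Hm Hf2m]]. intros y Hy.
    apply Rlt_le_trans with m; [exact Hm|]. apply Hf2m. unfold I01, I01o in *. lra. }
  pose proof (tangent_slope_right f1 f2 f3 Hf1_cont Hf1_derive Hf3 Hf2_pos H0 Hineq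
                a ta x0 u Hat Hata Hx0 Hx0u Heq2) as Hright.
  pose proof (tangent_slope_left f1 f2 f3 Hf1_cont Hf1_derive Hf3 Hf2_pos H0 Hineq
                a ta x0 u Hat Hata Hx0 Hx0u Heq2) as Hleft.
  unfold I01 in Hx, Hxu, Hx0, Hx0u.
  enough (a * f (x0 - u) - ta * f x0 <= a * f (x - u) - ta * f x) by lra.
  destruct (Rle_or_lt x0 x) as [Hle | Hlt].
  - apply (shifted_gap_nondecreasing f f1 Hf_cont Hf_derive); unfold I01; try lra.
    intros y Hy. apply Hright; lra.
  - apply (shifted_gap_nonincreasing f f1 Hf_cont Hf_derive); unfold I01; try lra.
    intros y Hy. apply Hleft; lra.
Qed.
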